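(* Let $R$ be an associative ring with identity, let $a,b,c\in R$ and put $t=cab$. Suppose $t$ is regular. Then the following are equivalent: (i) $a$ has a $(b,c)$-inverse; (ii) $r(a)\cap bR=\{0\}$ and $R=abR\oplus r(c)$; (iii) $r(t)=r(b)$ and $tR=cR$; (iv) $l(t)=l(c)$ and $Rt=Rb$; (v) $l(t)=l(c)$ and $r(t)=r(b)$.
   Context: For $a,b,c\in R$, $a$ is $(b,c)$-invertible if there exists $y\in R$ with $y\in (bRy)\cap(yRc)$, $yab=b$ and $cay=c$; such $y$ is unique and called the $(b,c)$-inverse of $a$, denoted $a^{\|(b,c)}$. An element is regular if $x=xzx$ for some $z\in R$. For $x\in R$: $l(x)=\{z\in R:zx=0\}$, $r(x)=\{z\in R:xz=0\}$, $xR=\{xz:z\in R\}$, $Rx=\{zx:z\in R\}$; $\oplus$ denotes an internal direct sum of right ideals (additive subgroups). *)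

(* R : pzRingType = associative ring with identity (0 = 1 allowed). *)
From HB Require Import structures.
From mathcomp Require Import all_boot all_algebra.
Set Implicit Arguments. Unset Strict Implicit. Unset Printing Implicit Defensive.
Import GRing.Theory.
Local Open Scope ring_scope.

Section Defs.
Variable R : pzRingType.

Definition rann (x : R) : R -> Prop := fun z => x * z = 0.
Definition lann (x : R) : R -> Prop := fun z => z * x = 0.
Definition rideal (x : R) : R -> Prop := fun z => exists w, z = x * w.
Definition lideal (x : R) : R -> Prop := fun z => exists w, z = w * x.

Definition seteq (A B : R -> Prop) : Prop := forall z, A z <-> B z.

Definition cap_zero (A B : R -> Prop) : Prop :=
  forall z, (A z /\ B z) <-> z = 0.

Definition full_direct_sum (A B : R -> Prop) : Prop :=
  (forall x, exists p q, A p /\ B q /\ x = p + q) /\ cap_zero A B.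

Definition regular (x : R) : Prop := exists z, x = x * z * x.

Definition is_bc_inverse (a b c y : R) : Prop :=
  (exists u, y = b * u * y) /\ (exists v, y = y * v * c) /\
  y * a * b = b /\ c * a * y = c.

Definition bc_invertible (a b c : R) : Prop := exists y, is_bc_inverse a b c y.

End Defs.

From HB Require Import structures.
From mathcomp Require Import all_boot all_algebra.
Import GRing.Theory.
Set Implicit Arguments.
Unset Strict Implicit.
Unset Printing Implicit Defensive.
Local Open Scope ring_scope.

(* With t = cab, a is (b,c)-invertible exactly when b = s t and c = t w for
   some s, w; the inverse is then s c = b w.  When t = t z t is regular,
   b lies in Rt iff r(t) <= r(b) (apply the hypothesis to 1 - z t), and dually
   c lies in tR iff l(t) <= l(c).  Each of the conditions (ii)-(v) reduces to
   these two memberships, because the opposite inclusions r(b) <= r(t),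
   l(c) <= l(t), tR <= cR and Rt <= Rb always hold. *)

Section BCInverse.
Variable R : pzRingType.
Implicit Types a b c t x y : R.

Lemma bc_invertibleP a b c :
  bc_invertible a b c <-> lideal (c * a * b) b /\ rideal (c * a * b) c.
Proof.
split=> [[y [[u yE] [[v yE'] [yab cay]]]]|[[s bE] [w cE]]].
  split; first by exists (y * v); rewrite -{1}yab {1}yE' !mulrA.
  by exists (u * y); rewrite -{1}cay {1}yE !mulrA.
have scE : s * c = b * w by rewrite [in LHS]cE [in RHS]bE !mulrA.
have yay : s * c * a * (s * c) = s * c.
  by rewrite {2}scE [in RHS]cE !mulrA.
exists (s * c); split; [|split; [|split]].
- by exists (w * a); rewrite -{1}yay {1}scE !mulrA.
- by exists (a * s); rewrite -{1}yay !mulrA.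
- by rewrite [in RHS]bE !mulrA.
- by rewrite scE [in RHS]cE !mulrA.
Qed.

Lemma lideal_rann_sub t b : lideal t b -> forall x, rann t x -> rann b x.
Proof. by move=> [s ->] x tx0; rewrite /rann -mulrA tx0 mulr0. Qed.

Lemma rideal_lann_sub t c : rideal t c -> forall x, lann t x -> lann c x.
Proof. by move=> [w ->] x xt0; rewrite /lann mulrA xt0 mul0r. Qed.

Lemma regular_rann_subP t b :
  regular t -> (forall x, rann t x -> rann b x) <-> lideal t b.
Proof.
move=> [z tE]; split; last exact: lideal_rann_sub.
move=> sub_rann; exists (b * z).
have /sub_rann : rann t (1 - z * t) by rewrite /rann mulrBr mulr1 mulrA -tE subrr.
by rewrite /rann mulrBr mulr1 mulrA => /eqP; rewrite subr_eq0 => /eqP.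
Qed.

Lemma regular_lann_subP t c :
  regular t -> (forall x, lann t x -> lann c x) <-> rideal t c.
Proof.
move=> [z tE]; split; last exact: rideal_lann_sub.
move=> sub_lann; exists (z * c).
have /sub_lann : lann t (1 - t * z) by rewrite /lann mulrBl mul1r -tE subrr.
by rewrite /lann mulrBl mul1r -mulrA => /eqP; rewrite subr_eq0 => /eqP.
Qed.

Lemma seteq_rann_mull x b :
  seteq (rann (x * b)) (rann b) <-> (forall y, rann (x * b) y -> rann b y).
Proof.
split=> [eq_rann y /eq_rann //|sub_rann y]; split; first exact: sub_rann.
by rewrite /rann -mulrA => ->; rewrite mulr0.
Qed.

Lemma seteq_lann_mulr c x :
  seteq (lann (c * x)) (lann c) <-> (forall y, lann (c * x) y -> lann c y).
Proof.
split=> [eq_lann y /eq_lann //|sub_lann y]; split; first exact: sub_lann.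
by rewrite /lann mulrA => ->; rewrite mul0r.
Qed.

Lemma seteq_rideal_mulr c x :
  seteq (rideal (c * x)) (rideal c) <-> rideal (c * x) c.
Proof.
split=> [eq_rideal|[w cE] y]; first by apply/eq_rideal; exists 1; rewrite mulr1.
split=> [[v ->]|[v ->]]; first by exists (x * v); rewrite mulrA.
by exists (w * v); rewrite {1}cE mulrA.
Qed.

Lemma seteq_lideal_mull x b :
  seteq (lideal (x * b)) (lideal b) <-> lideal (x * b) b.
Proof.
split=> [eq_lideal|[s bE] y]; first by apply/eq_lideal; exists 1; rewrite mul1r.
split=> [[v ->]|[v ->]]; first by exists (v * x); rewrite mulrA.
by exists (v * s); rewrite {1}bE mulrA.
Qed.

Lemma cap_zeroP {A B : R -> Prop} :
  A 0 -> B 0 -> cap_zero A B <-> (forall x, A x -> B x -> x = 0).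
Proof.
move=> A0 B0; split=> [capAB x Ax Bx|AB0 x]; first exact/(capAB x).1.
by split=> [[]|->]; [exact: AB0|].
Qed.

Lemma rann0 x : rann x 0.
Proof. exact: mulr0. Qed.

Lemma rideal0 x : rideal x 0.
Proof. by exists 0; rewrite mulr0. Qed.

Lemma cap_zero_rann_rideal a b c :
  cap_zero (rann a) (rideal b) /\ cap_zero (rideal (a * b)) (rann c) <->
  (forall x, rann (c * a * b) x -> rann b x).
Proof.
have cap_ab := cap_zeroP (rann0 a) (rideal0 b).
have cap_abc := cap_zeroP (rideal0 (a * b)) (rann0 c).
split=> [[/cap_ab ab0 /cap_abc abc0] x tx0|sub_rann].
  apply: ab0; last by exists x.
  rewrite /rann mulrA; apply: abc0; first by exists x.
  by rewrite /rann !mulrA.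
split; [apply/cap_ab => y ay0 [x yE]|apply/cap_abc => y [x yE] cy0]; rewrite yE.
  by apply: sub_rann; rewrite /rann -!mulrA -yE ay0 mulr0.
move: cy0; rewrite /rann yE !mulrA => /sub_rann.
by rewrite /rann -mulrA => ->; rewrite mulr0.
Qed.

Lemma rideal_add_rann_full x c :
  (forall y, exists p q, rideal x p /\ rann c q /\ y = p + q) <->
  rideal (c * x) c.
Proof.
split=> [cover|[w cE] y].
  have [p [q [[w pE] [cq0 oneE]]]] := cover 1.
  by exists w; rewrite -{1}[c]mulr1 oneE mulrDr cq0 addr0 pE mulrA.
exists (x * w * y), (y - x * w * y); split; last split.
- by exists (w * y); rewrite mulrA.
- by rewrite /rann mulrBr !mulrA -cE subrr.
- by rewrite subrKC.
Qed.

End BCInverse.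

Theorem theorem3p4 (R : pzRingType) (a b c : R) :
  regular (c * a * b) ->
  let t := c * a * b in
  [/\ (bc_invertible a b c <->
         (cap_zero (rann a) (rideal b) /\ full_direct_sum (rideal (a * b)) (rann c))),
      (bc_invertible a b c <->
         (seteq (rann t) (rann b) /\ seteq (rideal t) (rideal c))),
      (bc_invertible a b c <->
         (seteq (lann t) (lann c) /\ seteq (lideal t) (lideal b))) &
      (bc_invertible a b c <->
         (seteq (lann t) (lann c) /\ seteq (rann t) (rann b)))].
Proof.
move=> t_reg t; rewrite /full_direct_sum.
have bcP := bc_invertibleP a b c.
have rannP := regular_rann_subP b t_reg.
have lannP := regular_lann_subP c t_reg.
have capP := cap_zero_rann_rideal a b c.
have coverP := rideal_add_rann_full (a * b) c.
have rannE := seteq_rann_mull (c * a) b.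
have lannE := seteq_lann_mulr c (a * b).
have ridealE := seteq_rideal_mulr c (a * b).
have lidealE := seteq_lideal_mull (c * a) b.
rewrite {}/t; rewrite mulrA in coverP lannE ridealE.
split; tauto.
Qed.
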